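(* Let $(V,E,\sigma)$ be an influence graph and let $\mu : V \rightarrow \{+,-\}$ be a (partial) vertex labeling. If $X$ is an answer set of the disjunctive logic program $P_D\cup\tau((V,E,\sigma),\mu)$, then $\{i \mid \mathit{active}(i)\in X\}$ is a Minimal Inconsistent Core.
   Context: An influence graph is a triple $(V,E,\sigma)$ where $V$ is a finite set of vertices, $E\subseteq V\times V$ is a set of directed edges (an edge from $j$ to $i$ is written $j\rightarrow i$), and $\sigma : E\rightarrow\{+,-\}$ is a partial labeling of the edges; in addition, some vertices of $V$ are designated as input vertices. Signs are multiplied as numbers ($++=--=+$, $+-=-+=-$). Given a partial vertex labeling $\mu:V\rightarrow\{+,-\}$ and total labelings $\sigma':E\rightarrow\{+,-\}$, $\mu':V\rightarrow\{+,-\}$, the value $\mu'(i)$ is called consistent if there is an edge $j\rightarrow i$ in $E$ with $\mu'(i)=\mu'(j)\sigma'(j,i)$. A subset $W\subseteq V$ is a Minimal Inconsistent Core (MIC) if (1) for all total extensions $\sigma'$ of $\sigma$ and $\mu'$ of $\mu$ there is some non-input vertex $i\in W$ such that $\mu'(i)$ is inconsistent, and (2) for every proper subset $W'\subset W$ there are total extensions $\sigma'$ of $\sigma$ and $\mu'$ of $\mu$ such that $\mu'(i)$ is consistent for every non-input vertex $i\in W'$. Answer set semantics: a disjunctive logic program is a set of rules $a_1;\dots;a_l \leftarrow b_1,\dots,b_m,\mathit{not}\ c_1,\dots,\mathit{not}\ c_n$ (with $l=0$ giving an integrity constraint, whose empty head is false). Rules with (capitalized) variables stand for all their ground instances obtained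 by substituting constants occurring in the program; a built-in comparison such as $S\neq T$ keeps only instances where the substituted constants differ. A conditional literal $\mathit{opposite}(U,V):\mathit{edge}(U,V)$ in a body, for fixed $V=v$, stands for the conjunction of all atoms $\mathit{opposite}(u,v)$ such that $\mathit{edge}(u,v)$ is a fact of the program (the empty conjunction if there is none). For a set $X$ of ground atoms, the reduct $P^X$ consists of $\{a_1,\dots,a_l\}\leftarrow b_1,\dots,b_m$ for each ground rule with $\{c_1,\dots,c_n\}\cap X=\emptyset$; $X$ is an answer set of $P$ if it is a $\subseteq$-minimal model of $P^X$. Here $+$ and $-$ are constants and vertex names are constants. The instance $\tau((V,E,\sigma),\mu)$ is the set of facts: $\mathit{vertex}(i)$ for each $i\in V$; $\mathit{edge}(j,i)$ for each $j\rightarrow i$ in $E$; $\mathit{observedE}(j,i,s)$ whenever $\sigma(j,i)=s$ is defined; $\mathit{observedV}(i,s)$ whenever $\mu(i)=s$ is defined; $\mathit{input}(i)$ for each input vertex $i$. The program $P_D$ consists of the rules $\mathit{labelV}(V,S)\leftarrow \mathit{observedV}(V,S)$; $\mathit{labelE}(U,V,S)\leftarrow \mathit{observedE}(U,V,S)$; $\mathit{active}(V);\mathit{inactive}(V)\leftarrow \mathit{vertex}(V),\mathit{not}\ \mathit{input}(V)$; $\mathit{edgeMIC}(U,V)\leftarrow \mathit{edge}(U,V),\mathit{active}(V)$; $\mathit{vertexMIC}(U)\leftarrow \mathit{edgeMIC}(U,V)$; $\mathit{vertexMIC}(V)\leftarrow \mathit{active}(V)$; $\mathit{labelV}(V,+);\mathit{labelV}(V,-)\leftarrow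 \mathit{vertexMIC}(V)$; $\mathit{labelE}(U,V,+);\mathit{labelE}(U,V,-)\leftarrow \mathit{edgeMIC}(U,V)$; $\mathit{opposite}(U,V)\leftarrow \mathit{labelE}(U,V,-),\mathit{labelV}(U,S),\mathit{labelV}(V,S)$; $\mathit{opposite}(U,V)\leftarrow \mathit{labelE}(U,V,+),\mathit{labelV}(U,S),\mathit{labelV}(V,T),S\neq T$; $\mathit{bottom}\leftarrow \mathit{active}(V),\mathit{opposite}(U,V):\mathit{edge}(U,V)$; $\leftarrow \mathit{not}\ \mathit{bottom}$; $\mathit{labelV}(V,+)\leftarrow \mathit{bottom},\mathit{vertex}(V)$; $\mathit{labelV}(V,-)\leftarrow \mathit{bottom},\mathit{vertex}(V)$; $\mathit{labelE}(U,V,+)\leftarrow \mathit{bottom},\mathit{edge}(U,V)$; $\mathit{labelE}(U,V,-)\leftarrow \mathit{bottom},\mathit{edge}(U,V)$; $\mathit{labelV'}(W,V,+);\mathit{labelV'}(W,V,-)\leftarrow \mathit{active}(W),\mathit{vertexMIC}(V)$; $\mathit{labelE'}(W,U,V,+);\mathit{labelE'}(W,U,V,-)\leftarrow \mathit{active}(W),\mathit{edgeMIC}(U,V)$; $\mathit{labelV'}(W,V,S)\leftarrow \mathit{active}(W),\mathit{observedV}(V,S)$; $\mathit{labelE'}(W,U,V,S)\leftarrow \mathit{active}(W),\mathit{observedE}(U,V,S)$; $\mathit{receive'}(W,V,+)\leftarrow \mathit{labelE'}(W,U,V,S),\mathit{labelV'}(W,U,S),V\neq W$; $\mathit{receive'}(W,V,-)\leftarrow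 \mathit{labelE'}(W,U,V,S),\mathit{labelV'}(W,U,T),V\neq W,S\neq T$; $\leftarrow \mathit{labelV'}(W,V,S),\mathit{active}(V),V\neq W,\mathit{not}\ \mathit{receive'}(W,V,S)$. *)

From mathcomp Require Import all_boot.
From Stdlib Require Import List.
Import ListNotations.

Set Implicit Arguments.
Unset Strict Implicit.
Unset Printing Implicit Defensive.

(** Signs: [true] is [+], [false] is [-]. Product of signs. *)
Definition sign_mul (s t : bool) : bool := Bool.eqb s t.

(** * Influence graphs and Minimal Inconsistent Cores
    An influence graph is given by a finite vertex type [V], an edge relation
    [E] (E j i means j -> i), a partial edge labeling [sigma] (only its values
    on edges matter), and the set [input] of input vertices.  [mu] is a
    partial vertex labeling. *)

Section IG.
Variables (V : finType) (E : V -> V -> bool) (sigma : V -> V -> option bool)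
          (input : V -> bool) (mu : V -> option bool).

Definition ext_E (sigma' : V -> V -> bool) : Prop :=
  forall j i s, E j i -> sigma j i = Some s -> sigma' j i = s.

Definition ext_V (mu' : V -> bool) : Prop :=
  forall i s, mu i = Some s -> mu' i = s.

Definition consistent (sigma' : V -> V -> bool) (mu' : V -> bool) (i : V) : Prop :=
  exists j, E j i /\ mu' i = sign_mul (mu' j) (sigma' j i).

Definition proper_subset (W' W : V -> Prop) : Prop :=
  (forall x, W' x -> W x) /\ exists x, W x /\ ~ W' x.

Definition MIC (W : V -> Prop) : Prop :=
  (forall sigma' mu', ext_E sigma' -> ext_V mu' ->
     exists i, W i /\ ~~ input i /\ ~ consistent sigma' mu' i)
  /\
  (forall W', proper_subset W' W ->
     exists sigma' mu', ext_E sigma' /\ ext_V mu' /\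
       forall i, W' i -> ~~ input i -> consistent sigma' mu' i).
End IG.

Record rule (A : Type) := Rule {
  head : A -> Prop;   (* disjunction a_1 ; ... ; a_l   (empty = false) *)
  pos  : A -> Prop;
  neg  : A -> Prop
}.

Record prule (A : Type) := PRule { phead : A -> Prop; ppos : A -> Prop }.

Definition reduct (A : Type) (P : rule A -> Prop) (X : A -> Prop) : prule A -> Prop :=
  fun r' => exists r, P r /\ (forall c, neg r c -> ~ X c) /\
                      r' = PRule (head r) (pos r).

Definition pmodel (A : Type) (P : prule A -> Prop) (Y : A -> Prop) : Prop :=
  forall r, P r -> (forall b, ppos r b -> Y b) -> exists a, phead r a /\ Y a.

Definition answer_set (A : Type) (P : rule A -> Prop) (X : A -> Prop) : Prop :=
  pmodel (reduct P X) X /\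
  forall Y, (forall a, Y a -> X a) -> pmodel (reduct P X) Y -> forall a, X a -> Y a.

Section Program.
Variable V : finType.

(** constants of the program: vertex names and the two signs *)
Definition const := (V + bool)%type.
Definition cplus : const := inr true.
Definition cminus : const := inr false.

Inductive atom : Type :=
| vertex of const
| edge of const & const
| observedE of const & const & const
| observedV of const & const
| input of const
| labelV of const & const
| labelE of const & const & const
| active of const
| inactive of const
| edgeMIC of const & const
| vertexMIC of const
| opposite of const & const
| bottom
| labelV' of const & const & const
| labelE' of const & const & const & const
| receive' of const & const & const.

Definition R (h p n : list atom) : rule atom :=
  Rule (fun a => In a h) (fun a => In a p) (fun a => In a n).

Variables (E : V -> V -> bool) (sigma : V -> V -> option bool)
          (inp : V -> bool) (mu : V -> option bool).

Inductive tau_fact : atom -> Prop :=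
| f_vertex i : tau_fact (vertex (inl i))
| f_edge j i : E j i -> tau_fact (edge (inl j) (inl i))
| f_obsE j i s : E j i -> sigma j i = Some s ->
    tau_fact (observedE (inl j) (inl i) (inr s))
| f_obsV i s : mu i = Some s -> tau_fact (observedV (inl i) (inr s))
| f_input i : inp i -> tau_fact (input (inl i)).

(** the conditional literal opposite(U,V):edge(U,V) for fixed V = v *)
Definition cond_body (v : const) : atom -> Prop :=
  fun a => a = active v \/
           exists u, tau_fact (edge u v) /\ a = opposite u v.

(** ground instances of P_D (variables range over all constants), plus the
    facts of tau *)
Inductive ground_prog : rule atom -> Prop :=
| g_fact a : tau_fact a -> ground_prog (R [a] [] [])
| g1 v s : ground_prog (R [labelV v s] [observedV v s] [])
| g2 u v s : ground_prog (R [labelE u v s] [observedE u v s] [])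
| g3 v : ground_prog (R [active v; inactive v] [vertex v] [input v])
| g4 u v : ground_prog (R [edgeMIC u v] [edge u v; active v] [])
| g5 u v : ground_prog (R [vertexMIC u] [edgeMIC u v] [])
| g6 v : ground_prog (R [vertexMIC v] [active v] [])
| g7 v : ground_prog (R [labelV v cplus; labelV v cminus] [vertexMIC v] [])
| g8 u v : ground_prog (R [labelE u v cplus; labelE u v cminus] [edgeMIC u v] [])
| g9 u v s : ground_prog
    (R [opposite u v] [labelE u v cminus; labelV u s; labelV v s] [])
| g10 u v s t : s <> t -> ground_prog
    (R [opposite u v] [labelE u v cplus; labelV u s; labelV v t] [])
| g11 v : ground_prog (Rule (fun a => a = bottom) (cond_body v) (fun _ => False))
| g12 : ground_prog (R [] [] [bottom])
| g13 v : ground_prog (R [labelV v cplus] [bottom; vertex v] [])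
| g14 v : ground_prog (R [labelV v cminus] [bottom; vertex v] [])
| g15 u v : ground_prog (R [labelE u v cplus] [bottom; edge u v] [])
| g16 u v : ground_prog (R [labelE u v cminus] [bottom; edge u v] [])
| g17 w v : ground_prog
    (R [labelV' w v cplus; labelV' w v cminus] [active w; vertexMIC v] [])
| g18 w u v : ground_prog
    (R [labelE' w u v cplus; labelE' w u v cminus] [active w; edgeMIC u v] [])
| g19 w v s : ground_prog (R [labelV' w v s] [active w; observedV v s] [])
| g20 w u v s : ground_prog (R [labelE' w u v s] [active w; observedE u v s] [])
| g21 w u v s : v <> w -> ground_prog
    (R [receive' w v cplus] [labelE' w u v s; labelV' w u s] [])
| g22 w u v s t : v <> w -> s <> t -> ground_prog
    (R [receive' w v cminus] [labelE' w u v s; labelV' w u t] [])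
| g23 w v s : v <> w -> ground_prog
    (R [] [labelV' w v s; active v] [receive' w v s]).

End Program.

From Pilot Require Import Defs.
From mathcomp Require Import all_boot.
From Stdlib Require Import Classical ClassicalEpsilon.

(* The constraint [<- not bottom] puts [bottom] into every answer set X, and the
   saturation rules then put every vertex and edge label into X.
   (1) If some total extensions (sigma', mu') made every active vertex
   consistent, the atoms of X that agree with (sigma', mu') would, without
   [bottom], still form a model of the reduct: [bottom] can only be derived
   from an active vertex all of whose incoming edges are labeled [opposite].
   This contradicts the minimality of X.
   (2) If W' is a proper subset of the active vertices, pick an active x
   outside W'.  The guessed labels [labelV' x _ _] and [labelE' x _ _ _] are
   functional, since each is supported either by the guess or by an
   observation, and the last constraint forces every active vertex other than
   x to receive its own guessed label: they are total extensions under which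
   every vertex of W' is consistent. *)

Set Implicit Arguments.
Unset Strict Implicit.
Unset Printing Implicit Defensive.

Section AnswerSets.
Variables (A : Type) (P : rule A -> Prop) (X : A -> Prop).
Hypothesis HX : answer_set P X.

Lemma answer_set_closed r : P r -> (forall c, neg r c -> ~ X c) ->
  (forall b, pos r b -> X b) -> exists2 a, Defs.head r a & X a.
Proof.
move=> Pr Hneg Hpos.
have [|a [Ha Xa]] := HX.1 (PRule (Defs.head r) (pos r)) _ Hpos; last by exists a.
by exists r.
Qed.

Lemma answer_set_minimal (Y : A -> Prop) : (forall a, Y a -> X a) ->
  (forall r, P r -> (forall c, neg r c -> ~ X c) -> (forall b, pos r b -> Y b) ->
     exists2 a, Defs.head r a & Y a) ->
  forall a, X a -> Y a.
Proof.
move=> YX Yclosed; apply: (HX.2 Y YX) => _ [r [Pr [Hneg ->]]] /= Hpos.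
by have [a] := Yclosed r Pr Hneg Hpos; exists a.
Qed.

(* Otherwise [X] without [a] would still be a model of the reduct. *)
Lemma answer_set_supported a : X a -> exists r, [/\ P r, (forall c, neg r c -> ~ X c),
  (forall b, pos r b -> X b), Defs.head r a & (forall b, Defs.head r b -> X b -> b = a)].
Proof.
move=> Xa; apply: NNPP => Hunsupported.
suff /(_ a Xa) [] : forall b, X b -> X b /\ b <> a by [].
apply: answer_set_minimal => [b [] //|r Pr Hneg Hpos].
have [h Hh Xh] := answer_set_closed Pr Hneg (fun b Hb => (Hpos b Hb).1).
have [eq_ha | ha] := classic (h = a); last by exists h.
subst h.
apply: NNPP => Hnone; apply: Hunsupported; exists r; split => // [b /Hpos[]//|b Hb Xb].
by apply: NNPP => ba; apply: Hnone; exists b.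
Qed.

End AnswerSets.

Definition sign_of (P : bool -> Prop) : bool :=
  if excluded_middle_informative (P true) then true else false.

Lemma sign_ofE (P : bool -> Prop) b :
  (forall b b', P b -> P b' -> b = b') -> P b -> sign_of P = b.
Proof.
rewrite /sign_of => Pfun Pb; case: excluded_middle_informative => [Pt | nPt].
  exact: Pfun Pt Pb.
by case: b Pb.
Qed.

(* Splits [Hpos : forall b, In b [:: x1; ..; xn] -> C b] into [C x1], .., [C xn]. *)
Ltac split_body Hpos :=
  cbn in Hpos;
  lazymatch type of Hpos with
  | forall b, ?x = b \/ _ -> _ =>
      let Xb := fresh "Xb" in
      have Xb := Hpos x (or_introl erefl);
      let Hrest := fresh "Hpos" in
      have Hrest := fun b hb => Hpos b (or_intror hb);
      clear Hpos; split_body Hrest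
  | forall b, False -> _ => clear Hpos
  | _ => idtac
  end.

Definition agrees (V : finType) (sigma' : V -> V -> bool) (mu' : V -> bool)
    (a : atom V) : Prop :=
  match a with
  | labelV (inl i) (inr b) => b = mu' i
  | labelE (inl j) (inl i) (inr b) => b = sigma' j i
  | opposite (inl j) (inl i) => mu' i <> sign_mul (mu' j) (sigma' j i)
  | labelV _ _ | labelE _ _ _ | opposite _ _ | bottom => False
  | _ => True
  end.

Lemma agrees_labelV (V : finType) sigma' mu' (v s : const V) :
  agrees sigma' mu' (labelV v s) -> exists i, v = inl i /\ s = inr (mu' i).
Proof. by case: v s => [i|?] [?|b] //= ->; exists i. Qed.

Section Program.
Variables (V : finType) (E : V -> V -> bool) (sigma : V -> V -> option bool)
          (inp : V -> bool) (mu : V -> option bool) (X : atom V -> Prop).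
Hypothesis HX : answer_set (ground_prog E sigma inp mu) X.

Local Notation fact := (tau_fact E sigma inp mu).

(* Applies the model property of X to a ground rule, discharging its body and
   substituting the head atom found in X. *)
Ltac fire rule :=
  destruct (answer_set_closed HX rule) as [h Hhead Xh];
  [ move=> ? /=; intuition (subst; auto) ..
  | cbn in Hhead; repeat destruct Hhead as [Hhead|Hhead]; try contradiction; subst h ].

(* Case analysis on the rules that can support [Xa]. *)
Ltac invert_support Xa :=
  let Pr := fresh "Pr" in let Hneg := fresh "Hneg" in let Hpos := fresh "Hpos" in
  let Hh := fresh "Hhead" in let Huniq := fresh "Huniq" in
  destruct (answer_set_supported HX Xa) as [? [Pr Hneg Hpos Hh Huniq]];
  destruct Pr; cbn in Hh; unfold cplus, cminus in *;
  repeat destruct Hh as [Hh|Hh]; try contradiction; try discriminate;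
  try (injection Hh; clear Hh; intros; subst); try subst;
  try (match goal with T : tau_fact _ _ _ _ _ |- _ => inversion T; clear T; subst end);
  try split_body Hpos.

Lemma bottom_in : X (bottom V).
Proof. by apply: NNPP => nXb; fire (g12 E sigma inp mu). Qed.

Lemma fact_in a : fact a -> X a.
Proof. by move=> Fa; fire (g_fact Fa). Qed.

Lemma edge_inv u v : X (edge u v) -> exists j i, [/\ u = inl j, v = inl i & E j i].
Proof. by move=> Xe; invert_support Xe; exists j, i. Qed.

Lemma observedV_inv v s : X (observedV v s) ->
  exists i b, [/\ v = inl i, s = inr b & mu i = Some b].
Proof. by move=> Xo; invert_support Xo; exists i, s0. Qed.

Lemma observedE_inv u v s : X (observedE u v s) ->
  exists j i b, [/\ u = inl j, v = inl i, s = inr b, E j i & sigma j i = Some b].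
Proof. by move=> Xo; invert_support Xo; exists j, i, s0. Qed.

Lemma vertex_inv v : X (vertex v) -> exists i, v = inl i.
Proof. by move=> Xv; invert_support Xv; exists i. Qed.

Lemma active_inv v : X (active v) -> exists2 i, v = inl i & ~~ inp i.
Proof.
move=> Xa; invert_support Xa; have [i ?] := vertex_inv Xb; subst v.
exists i => //; apply/negP => inp_i.
by apply: (Hneg _ (or_introl erefl)); apply: fact_in; constructor.
Qed.

Lemma edgeMIC_inv u v : X (edgeMIC u v) -> exists j i, [/\ u = inl j, v = inl i & E j i].
Proof. by move=> Xe; invert_support Xe; apply: edge_inv. Qed.

Lemma vertexMIC_inv v : X (vertexMIC v) -> exists i, v = inl i.
Proof.
move=> Xv; invert_support Xv.
  by have [j [i [-> _ _]]] := edgeMIC_inv Xb; exists j.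
by have [i ->] := active_inv Xb; exists i.
Qed.

Lemma labelV'_inv w v s : X (labelV' w v s) -> exists b, s = inr b.
Proof.
by move=> Xl; invert_support Xl; last have [i [b [_ -> _]]] := observedV_inv Xb0; eexists.
Qed.

Lemma labelE'_inv w u v s : X (labelE' w u v s) ->
  exists j i b, [/\ u = inl j, v = inl i, s = inr b & E j i].
Proof.
move=> Xl; invert_support Xl.
- by have [j [i [-> -> Eji]]] := edgeMIC_inv Xb0; exists j, i, true.
- by have [j [i [-> -> Eji]]] := edgeMIC_inv Xb0; exists j, i, false.
- by have [j [i [b [-> -> -> Eji _]]]] := observedE_inv Xb0; exists j, i, b.
Qed.

Lemma labelV'_observed w v b : X (labelV' w v (inr b)) ->
  X (labelV' w v (inr (~~ b))) -> exists2 i, v = inl i & mu i = Some b.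
Proof.
move=> Xb Xnb; invert_support Xb.
- by case: (Huniq _ (or_intror (or_introl erefl)) Xnb).
- by case: (Huniq _ (or_introl erefl) Xnb).
- by have [i [b' [-> [->] mu_i]]] := observedV_inv Xb1; exists i.
Qed.

Lemma labelV'_functional w v b b' :
  X (labelV' w v (inr b)) -> X (labelV' w v (inr b')) -> b = b'.
Proof.
case: b b' => -[] // Xb Xb'.
all: have [i Ev mu_i] := labelV'_observed Xb Xb'.
all: have [i' Ev' mu_i'] := labelV'_observed Xb' Xb.
all: congruence.
Qed.

Lemma labelE'_observed w u v b : X (labelE' w u v (inr b)) ->
  X (labelE' w u v (inr (~~ b))) ->
  exists j i, [/\ u = inl j, v = inl i & sigma j i = Some b].
Proof.
move=> Xb Xnb; invert_support Xb.
- by case: (Huniq _ (or_intror (or_introl erefl)) Xnb).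
- by case: (Huniq _ (or_introl erefl) Xnb).
- by have [j [i [b' [-> -> [->] _ sigma_ji]]]] := observedE_inv Xb1; exists j, i.
Qed.

Lemma labelE'_functional w u v b b' :
  X (labelE' w u v (inr b)) -> X (labelE' w u v (inr b')) -> b = b'.
Proof.
case: b b' => -[] // Xb Xb'.
all: have [j [i [Eu Ev sigma_ji]]] := labelE'_observed Xb Xb'.
all: have [j' [i' [Eu' Ev' sigma_ji']]] := labelE'_observed Xb' Xb.
all: congruence.
Qed.

Lemma receive'_inv w v s : X (receive' w v s) -> exists u s1 s2,
  [/\ X (labelE' w u v s1), X (labelV' w u s2) & s = inr (s1 == s2)].
Proof.
move=> Xr; invert_support Xr.
  by exists u, s0, s0; rewrite eqxx.
by exists u, s0, t; move/eqP/negbTE: H0 => ->.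
Qed.

Lemma active_vertexMIC v : X (active v) -> X (vertexMIC v).
Proof. by move=> Xa; fire (g6 E sigma inp mu v). Qed.

Lemma labelV'_total w v : X (active w) -> X (vertexMIC v) ->
  exists b, X (labelV' w v (inr b)).
Proof.
by move=> Xw Xv; fire (g17 E sigma inp mu w v); [exists true | exists false].
Qed.

Lemma receive'_in w v s : v <> w -> X (labelV' w v s) -> X (active v) ->
  X (receive' w v s).
Proof.
move=> vw Xl Xa; apply: NNPP => nXr.
by fire (g23 E sigma inp mu s vw).
Qed.

Lemma observedV_labelV' w v s : X (active w) -> X (observedV v s) -> X (labelV' w v s).
Proof. by move=> Xw Xo; fire (g19 E sigma inp mu w v s). Qed.

Lemma observedE_labelE' w u v s : X (active w) -> X (observedE u v s) ->
  X (labelE' w u v s).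
Proof. by move=> Xw Xo; fire (g20 E sigma inp mu w u v s). Qed.

Lemma labelV_saturated i b : X (labelV (inl i) (inr b)).
Proof.
have Xv : X (vertex (inl i)) by apply: fact_in; constructor.
have Xbot := bottom_in.
by case: b; [fire (g13 E sigma inp mu (inl i)) | fire (g14 E sigma inp mu (inl i))].
Qed.

Lemma labelE_saturated j i b : E j i -> X (labelE (inl j) (inl i) (inr b)).
Proof.
move=> Eji; have Xe : X (edge (inl j) (inl i)) by apply: fact_in; constructor.
have Xbot := bottom_in.
by case: b; [fire (g15 E sigma inp mu (inl j) (inl i))
             | fire (g16 E sigma inp mu (inl j) (inl i))].
Qed.

Lemma answer_set_proper_subset_consistent W' :
  proper_subset W' (fun i => X (active (inl i))) ->
  exists sigma' mu', ext_E E sigma sigma' /\ ext_V mu mu' /\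
    forall i, W' i -> ~~ inp i -> consistent E sigma' mu' i.
Proof.
move=> [sub [x [Xx nW'x]]].
pose mu' i := sign_of (fun b => X (labelV' (inl x) (inl i) (inr b))).
pose sigma' j i := sign_of (fun b => X (labelE' (inl x) (inl j) (inl i) (inr b))).
have mu'E i b : X (labelV' (inl x) (inl i) (inr b)) -> mu' i = b.
  exact/sign_ofE/labelV'_functional.
have sigma'E j i b : X (labelE' (inl x) (inl j) (inl i) (inr b)) -> sigma' j i = b.
  exact/sign_ofE/labelE'_functional.
exists sigma', mu'; split; [|split].
- move=> j i b Eji sigma_ji; apply/sigma'E/observedE_labelE' => //.
  exact/fact_in/f_obsE.
- move=> i b mu_i; apply/mu'E/observedV_labelV' => //.
  exact/fact_in/f_obsV.
- move=> i /[dup] W'i /sub Xi _.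
  have ix : inl i <> inl x :> const V by move=> [ix]; rewrite ix in W'i.
  have [b Xl] := labelV'_total Xx (active_vertexMIC Xi).
  have [u [s1 [s2 [X1 X2 [eb]]]]] := receive'_inv (receive'_in ix Xl Xi).
  have [j [_ [b1 [? [<-] ? Eji]]]] := labelE'_inv X1; subst u s1.
  have [b2 ?] := labelV'_inv X2; subst s2.
  exists j; split => //.
  rewrite (mu'E _ _ Xl) (sigma'E _ _ _ X1) (mu'E _ _ X2) eb.
  by destruct b1, b2.
Qed.

Lemma agrees_closed sigma' mu' :
  ext_E E sigma sigma' -> ext_V mu mu' ->
  (forall i, X (active (inl i)) -> consistent E sigma' mu' i) ->
  forall r, ground_prog E sigma inp mu r -> (forall c, neg r c -> ~ X c) ->
  (forall b, pos r b -> X b /\ agrees sigma' mu' b) ->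
  exists2 a, Defs.head r a & X a /\ agrees sigma' mu' a.
Proof.
move=> ext_sigma ext_mu cons r Pr Hneg Hpos.
have [a Ha Xa] := answer_set_closed HX Pr Hneg (fun b Hb => (Hpos b Hb).1).
destruct Pr; cbn in Ha; unfold cplus, cminus in *; try split_body Hpos.
all: try (match goal with H : _ /\ agrees _ _ (bottom _) |- _ => by case: H end).
all: try solve [exists a => //; split => //; repeat destruct Ha as [<-|Ha]; done].
- by case: Ha Xa => // <- Xa; exists a0; [left | split => //; case: H].
- have [i [b [? ? mu_i]]] := observedV_inv Xb.1; subst v s.
  case: Ha Xa => // <- Xa; exists (labelV (inl i) (inr b)); [left | split] => //=.
  by rewrite (ext_mu _ _ mu_i).
- have [j [i [b [? ? ? Eji sigma_ji]]]] := observedE_inv Xb.1; subst u v s.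
  case: Ha Xa => // <- Xa; exists (labelE (inl j) (inl i) (inr b)); [left | split] => //=.
  by rewrite (ext_sigma _ _ _ Eji sigma_ji).
- have [i ->] := vertexMIC_inv Xb.1.
  exists (labelV (inl i) (inr (mu' i))).
    by case: (mu' i); [left | right; left].
  by split => //; apply: labelV_saturated.
- have [j [i [-> -> Eji]]] := edgeMIC_inv Xb.1.
  exists (labelE (inl j) (inl i) (inr (sigma' j i))).
    by case: (sigma' j i); [left | right; left].
  by split => //; apply: labelE_saturated.
- have [j [? Es]] := agrees_labelV Xb0.2; have [i [? Es']] := agrees_labelV Xb1.2.
  subst u v s; case: Es' => mu_ji; case: Ha Xa => // <- Xa.
  exists (opposite (inl j) (inl i)); [left | split] => //=.
  by rewrite -Xb.2 mu_ji; case: (mu' i).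
- have [j [? Es]] := agrees_labelV Xb0.2; have [i [? Et]] := agrees_labelV Xb1.2.
  subst u v s t; case: Ha Xa => // <- Xa.
  exists (opposite (inl j) (inl i)); [left | split] => //=.
  by rewrite -Xb.2; case: (mu' i) (mu' j) H => -[].
- have [Xv _] := Hpos (active v) (or_introl erefl).
  have [i ? _] := active_inv Xv; subst v.
  have [j [Eji cons_ji]] := cons i Xv.
  have [_ opposite_ji] : X (opposite (inl j) (inl i)) /\
                         agrees sigma' mu' (opposite (inl j) (inl i)).
    by apply: Hpos; right; exists (inl j); split => //; constructor.
  by case: (opposite_ji cons_ji).
Qed.

Lemma answer_set_inconsistent sigma' mu' : ext_E E sigma sigma' -> ext_V mu mu' ->
  exists i, X (active (inl i)) /\ ~~ inp i /\ ~ consistent E sigma' mu' i.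
Proof.
move=> ext_sigma ext_mu; apply: NNPP => no_witness.
have cons i : X (active (inl i)) -> consistent E sigma' mu' i.
  move=> Xi; apply: NNPP => incons; apply: no_witness; exists i; split => //.
  by have [_ [<-]] := active_inv Xi.
have Y_closed := agrees_closed ext_sigma ext_mu cons.
have [] // := answer_set_minimal HX (fun a (Ya : X a /\ _) => Ya.1) Y_closed bottom_in.
Qed.

End Program.

Theorem theorem3 (V : finType) (E : V -> V -> bool)
  (sigma : V -> V -> option bool) (inp : V -> bool) (mu : V -> option bool)
  (X : atom V -> Prop) :
  answer_set (ground_prog E sigma inp mu) X ->
  MIC E sigma inp mu (fun i => X (active (inl i))).
Proof.
move=> HX; split.
  by move=> sigma' mu'; apply: answer_set_inconsistent.
by move=> W'; apply: answer_set_proper_subset_consistent.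
Qed.
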